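(* In the Setting below and under the Standing Assumption, let $x\in\mathbb{Q}\cap D$ be such that the Lyapunov exponent $\lambda(x)$ exists. Then $$\frac{1}{\ln 2}\max(0,\lambda(x))\le\liminf_{p\to\infty}\sigma(x,p)\le\limsup_{p\to\infty}\sigma(x,p)\le\frac{1}{\ln 2}\max(0,\bar\lambda(x));$$ in particular, whenever the loss of significance rate $\sigma(x)=\lim_{p\to\infty}\sigma(x,p)$ exists, it lies between these bounds, and if $\bar\lambda(x)=\lambda(x)$ then $\sigma(x)$ exists and equals $\frac{1}{\ln 2}\max(0,\lambda(x))$.
   Context: Setting. $D\subseteq\mathbb{R}$ is a compact interval and $f:D\to D$ is twice continuously differentiable on $D$ with $f''$ bounded. For $x\in D$ the orbit is $x_0=x$, $x_{n+1}=f(x_n)$. A floating-point number of precision $m$ is a real $s\cdot 2^{e-m}$ with $s,e\in\mathbb{Z}$, $|s|\le 2^m-1$; $rd_m(y)$ denotes rounding of $y$ to a nearest floating-point number of precision $m$. Let $L(a,e):=\sup\{|f'(y)|: y\in[a-e,a+e]\cap D\}$ and fix a function $\bar L$ with $L(a,e)\le\bar L(a,e)\le\min(\bar L_{max},\,L(a,e)+Ke)$ for constants $\bar L_{max},K\ge0$. For $x\in\mathbb{Q}\cap D$ and precision $m\ge1$ the computed sequence is $\hat x_0=rd_m(x)$, $\bar e_0=2^{-m}|\hat x_0|$, $\hat x_{n+1}=rd_m(f(\hat x_n))$, $\bar e_{n+1}=\bar L(\hat x_n,\bar e_n)\bar e_n+2^{-m}|\hat x_{n+1}|$ (all $\hat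 x_n$ assumed in $D$). For $N\in\mathbb{N}$, $p\in\mathbb{Z}$, $m_{min}(x,N,p)$ is the least $m\ge1$ such that the sequence computed at precision $m$ satisfies $\bar e_n\le\frac{10^{-p}}{1+10^{-p}}|\hat x_n|$ for all $n=0,\dots,N$. $\sigma(x,p):=\limsup_{N\to\infty} m_{min}(x,N,p)/N$, and the loss of significance rate is $\sigma(x):=\lim_{p\to\infty}\sigma(x,p)$. Standing Assumption: $x_n\ne0$ for all $n$ and $\lim_{N\to\infty}\mathrm{ld}(\min\{|x_n|:0\le n\le N\})/N=0$, $\mathrm{ld}=\log_2$. Lyapunov exponent: $\lambda(x):=\lim_{n\to\infty}\frac1n\sum_{k=0}^{n-1}\ln|f'(f^k(x))|$ when it exists. For $\alpha>0$, $\eta_\alpha(y)=\ln y$ if $y\ge\alpha$, $\eta_\alpha(y)=\ln\alpha$ if $0\le y<\alpha$; $\bar\lambda_\alpha(x):=\limsup_{n\to\infty}\frac1n\sum_{k=0}^{n-1}\eta_\alpha(|f'(f^k(x))|)$ and $\bar\lambda(x):=\lim_{\alpha\to0^+}\bar\lambda_\alpha(x)$. *)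

From Stdlib Require Import Reals Lra Lia ZArith QArith Qreals ClassicalEpsilon.
Open Scope R_scope.

Inductive Rbar : Type := Finite (r : R) | p_infty | m_infty.

Definition Rbar_le (x y : Rbar) : Prop :=
  match x, y with
  | m_infty, _ => True
  | _, p_infty => True
  | p_infty, _ => False
  | _, m_infty => False
  | Finite a, Finite b => a <= b
  end.

Definition Rbar_is_lub (E : Rbar -> Prop) (l : Rbar) : Prop :=
  (forall z, E z -> Rbar_le z l) /\
  (forall u, (forall z, E z -> Rbar_le z u) -> Rbar_le l u).
Definition Rbar_is_glb (E : Rbar -> Prop) (l : Rbar) : Prop :=
  (forall z, E z -> Rbar_le l z) /\
  (forall u, (forall z, E z -> Rbar_le u z) -> Rbar_le u l).

(* supremum / infimum in the extended reals (they always exist) *)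
Definition Rbar_lub (E : Rbar -> Prop) : Rbar :=
  epsilon (inhabits p_infty) (Rbar_is_lub E).
Definition Rbar_glb (E : Rbar -> Prop) : Rbar :=
  epsilon (inhabits p_infty) (Rbar_is_glb E).

Definition Rbar_limsup (u : nat -> Rbar) : Rbar :=
  Rbar_glb (fun y => exists N : nat,
    y = Rbar_lub (fun z => exists n : nat, (N <= n)%nat /\ z = u n)).
Definition Rbar_liminf (u : nat -> Rbar) : Rbar :=
  Rbar_lub (fun y => exists N : nat,
    y = Rbar_glb (fun z => exists n : nat, (N <= n)%nat /\ z = u n)).

Definition Rbar_cv (u : nat -> Rbar) (l : Rbar) : Prop :=
  match l with
  | Finite a => forall eps, 0 < eps -> exists P : nat, forall p, (P <= p)%nat ->
                  exists r, u p = Finite r /\ Rabs (r - a) < eps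
  | p_infty => forall M, exists P : nat, forall p, (P <= p)%nat -> Rbar_le (Finite M) (u p)
  | m_infty => forall M, exists P : nat, forall p, (P <= p)%nat -> Rbar_le (u p) (Finite M)
  end.

Definition Rbar_lim_0plus (g : R -> Rbar) (l : R) : Prop :=
  forall eps, 0 < eps -> exists delta, 0 < delta /\
    forall alpha, 0 < alpha < delta ->
      exists r, g alpha = Finite r /\ Rabs (r - l) < eps.

Definition inD (a b y : R) : Prop := a <= y <= b.

Fixpoint orbit (f : R -> R) (x : R) (n : nat) : R :=
  match n with O => x | S k => f (orbit f x k) end.

Fixpoint orbit_min_abs (f : R -> R) (x : R) (N : nat) : R :=
  match N with
  | O => Rabs x
  | S k => Rmin (orbit_min_abs f x k) (Rabs (orbit f x (S k)))
  end.

Definition ld (y : R) : R := ln y / ln 2.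

Fixpoint psum (g : nat -> R) (n : nat) : R :=
  match n with O => 0 | S k => psum g k + g k end.

Definition lyap_avg (f f' : R -> R) (x : R) (n : nat) : R :=
  psum (fun k => ln (Rabs (f' (orbit f x k)))) n / INR n.

Definition eta (alpha y : R) : R :=
  if Rle_dec alpha y then ln y else ln alpha.

Definition lyap_bar_alpha (f f' : R -> R) (x alpha : R) : Rbar :=
  Rbar_limsup (fun n =>
    Finite (psum (fun k => eta alpha (Rabs (f' (orbit f x k)))) n / INR n)).

Definition is_fp (m : nat) (y : R) : Prop :=
  exists s e : Z, (Z.abs s <= 2 ^ (Z.of_nat m) - 1)%Z /\
    y = IZR s * powerRZ 2 (e - Z.of_nat m).

Definition is_round_nearest (rd : nat -> R -> R) : Prop :=
  forall m y, is_fp m (rd m y) /\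
    forall z, is_fp m z -> Rabs (y - rd m y) <= Rabs (y - z).

Fixpoint computed (f : R -> R) (Lbar : R -> R -> R) (rd : nat -> R -> R)
    (m : nat) (x : R) (n : nat) : R * R :=
  match n with
  | O => let xh := rd m x in (xh, / 2 ^ m * Rabs xh)
  | S k => let (xh, e) := computed f Lbar rd m x k in
           let xh' := rd m (f xh) in
           (xh', Lbar xh e * e + / 2 ^ m * Rabs xh')
  end.

Definition xhat f Lbar rd m x n := fst (computed f Lbar rd m x n).
Definition ebar f Lbar rd m x n := snd (computed f Lbar rd m x n).

Definition prec_ok f Lbar rd (x : R) (m N : nat) (p : Z) : Prop :=
  forall n, (n <= N)%nat ->
    ebar f Lbar rd m x n <=
      powerRZ 10 (- p) / (1 + powerRZ 10 (- p)) * Rabs (xhat f Lbar rd m x n).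

Definition is_mmin f Lbar rd x (N : nat) (p : Z) (m : nat) : Prop :=
  (1 <= m)%nat /\ prec_ok f Lbar rd x m N p /\
  forall k, (1 <= k < m)%nat -> ~ prec_ok f Lbar rd x k N p.

Definition mmin_ratio f Lbar rd x (N : nat) (p : Z) : Rbar :=
  match excluded_middle_informative (exists m, is_mmin f Lbar rd x N p m) with
  | left _ => Finite (INR (epsilon (inhabits 0%nat) (is_mmin f Lbar rd x N p)) / INR N)
  | right _ => p_infty
  end.

Definition sigma_rate f Lbar rd x (p : Z) : Rbar :=
  Rbar_limsup (fun N => mmin_ratio f Lbar rd x N p).

(* set {|f'(y)| : y in [c-e,c+e] /\ D} whose sup is L(c,e) *)
Definition L_set (a b : R) (f' : R -> R) (c e : R) : R -> Prop :=
  fun z => exists y, inD a b y /\ Rabs (y - c) <= e /\ z = Rabs (f' y).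

From Stdlib Require Import Reals QArith Qreals ZArith.
From Stdlib Require Import Lra Lia Classical ClassicalEpsilon FunctionalExtensionality.
Open Scope R_scope.

(* The computed error bound [ebar] dominates the true error and, since [Lbar] dominates [|f'|],
   grows at least like the derivative products [exp (lyap_sum N)]; this gives the lower bound.
   Conversely, as long as the error is so small that [Lbar] exceeds [|f'(x_n)|] by a factor at
   most [1 + 1/(N+1)], it grows at most like [N exp (N (max(0,lam) + o(1)))]. The standing
   assumption and the existence of [lam] make the iterates and the derivatives along the orbit
   only subexponentially small, so a precision of [N max(0,lam) / ln 2 + o(N)] bits suffices.
   Hence [sigma(x,p) = max(0,lam) / ln 2] for every [p], and the bounds follow from
   [lam <= lambar]. *)

(** * Extended reals *)

Lemma Rbar_le_trans x y z : Rbar_le x y -> Rbar_le y z -> Rbar_le x z.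
Proof. destruct x, y, z; simpl; intros; try tauto; lra. Qed.

Lemma Rbar_le_antisym x y : Rbar_le x y -> Rbar_le y x -> x = y.
Proof. destruct x, y; simpl; intros; try tauto; try f_equal; lra. Qed.

Lemma Rbar_le_eps (w : Rbar) (A : R) :
  (forall eps, 0 < eps -> Rbar_le w (Finite (A + eps))) -> Rbar_le w (Finite A).
Proof.
  intros H. destruct w; simpl; auto.
  - apply Rnot_lt_le; intro Hlt.
    specialize (H ((r - A) / 2) ltac:(lra)); simpl in H; lra.
  - apply (H 1); lra.
Qed.

Lemma Rbar_ge_eps (w : Rbar) (A : R) :
  (forall eps, 0 < eps -> Rbar_le (Finite (A - eps)) w) -> Rbar_le (Finite A) w.
Proof.
  intros H. destruct w; simpl; auto.
  - apply Rnot_lt_le; intro Hlt.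
    specialize (H ((A - r) / 2) ltac:(lra)); simpl in H; lra.
  - apply (H 1); lra.
Qed.

Lemma Rbar_lub_ex (E : Rbar -> Prop) : exists l, Rbar_is_lub E l.
Proof.
  destruct (classic (E p_infty)) as [Hp|Hp].
  { exists p_infty; split.
    - intros z _; destruct z; simpl; auto.
    - intros u Hu; apply Hu; auto. }
  set (F := fun r => E (Finite r)).
  destruct (classic (exists r, F r)) as [Hne|Hne].
  - destruct (classic (bound F)) as [Hb|Hb].
    + destruct (completeness F Hb Hne) as [s [Hs1 Hs2]].
      exists (Finite s); split.
      * intros z Hz; destruct z; simpl; [apply Hs1; exact Hz|contradiction|auto].
      * intros u Hu; destruct u; simpl; auto.
        -- apply Hs2; intros r0 Hr; exact (Hu _ Hr).
        -- destruct Hne as [r0 Hr]; exact (Hu _ Hr).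
    + exists p_infty; split.
      * intros z _; destruct z; simpl; auto.
      * intros u Hu; destruct u; simpl; auto.
        -- apply Hb; exists r; intros t Ht; exact (Hu _ Ht).
        -- destruct Hne as [r0 Hr]; exact (Hu _ Hr).
  - exists m_infty; split.
    + intros z Hz; destruct z; simpl; [apply Hne; exists r; exact Hz|contradiction|auto].
    + intros u _; destruct u; simpl; auto.
Qed.

Lemma Rbar_glb_ex (E : Rbar -> Prop) : exists l, Rbar_is_glb E l.
Proof.
  destruct (Rbar_lub_ex (fun u => forall z, E z -> Rbar_le u z)) as [l [H1 H2]].
  exists l; split.
  - intros z Hz. apply H2. intros u Hu. apply Hu; auto.
  - intros u Hu. apply H1. auto.
Qed.

Lemma Rbar_lub_spec E : Rbar_is_lub E (Rbar_lub E).
Proof. unfold Rbar_lub. apply epsilon_spec, Rbar_lub_ex. Qed.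

Lemma Rbar_glb_spec E : Rbar_is_glb E (Rbar_glb E).
Proof. unfold Rbar_glb. apply epsilon_spec, Rbar_glb_ex. Qed.

Definition tail_lub (u : nat -> Rbar) (N : nat) : Rbar :=
  Rbar_lub (fun z => exists n : nat, (N <= n)%nat /\ z = u n).
Definition tail_glb (u : nat -> Rbar) (N : nat) : Rbar :=
  Rbar_glb (fun z => exists n : nat, (N <= n)%nat /\ z = u n).

Lemma tail_lub_ge u N n : (N <= n)%nat -> Rbar_le (u n) (tail_lub u N).
Proof. intros Hn. apply (proj1 (Rbar_lub_spec _)). exists n; auto. Qed.

Lemma tail_glb_le u N n : (N <= n)%nat -> Rbar_le (tail_glb u N) (u n).
Proof. intros Hn. apply (proj1 (Rbar_glb_spec _)). exists n; auto. Qed.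

Lemma Rbar_limsup_cv u A : Rbar_cv u (Finite A) -> Rbar_limsup u = Finite A.
Proof.
  intros Hc. apply Rbar_le_antisym.
  - apply Rbar_le_eps; intros eps He. destruct (Hc eps He) as [P HP].
    eapply Rbar_le_trans; [apply (proj1 (Rbar_glb_spec _)); exists P; reflexivity|].
    apply (proj2 (Rbar_lub_spec _)). intros z [n [Hn ->]].
    destruct (HP n Hn) as [r [-> Hr]]; simpl. apply Rabs_def2 in Hr; lra.
  - apply (proj2 (Rbar_glb_spec _)). intros z [N ->]. fold (tail_lub u N).
    apply Rbar_ge_eps; intros eps He. destruct (Hc eps He) as [P HP].
    destruct (HP (max N P) ltac:(lia)) as [r [Hr1 Hr2]].
    eapply Rbar_le_trans; [|apply (tail_lub_ge u N (max N P)); lia].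
    rewrite Hr1; simpl. apply Rabs_def2 in Hr2; lra.
Qed.

Lemma Rbar_liminf_cv u A : Rbar_cv u (Finite A) -> Rbar_liminf u = Finite A.
Proof.
  intros Hc. apply Rbar_le_antisym.
  - apply (proj2 (Rbar_lub_spec _)). intros z [N ->]. fold (tail_glb u N).
    apply Rbar_le_eps; intros eps He. destruct (Hc eps He) as [P HP].
    destruct (HP (max N P) ltac:(lia)) as [r [Hr1 Hr2]].
    eapply Rbar_le_trans; [apply (tail_glb_le u N (max N P)); lia|].
    rewrite Hr1; simpl. apply Rabs_def2 in Hr2; lra.
  - apply Rbar_ge_eps; intros eps He. destruct (Hc eps He) as [P HP].
    eapply Rbar_le_trans; [|apply (proj1 (Rbar_lub_spec _)); exists P; reflexivity].
    apply (proj2 (Rbar_glb_spec _)). intros z [n [Hn ->]].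
    destruct (HP n Hn) as [r [-> Hr]]; simpl. apply Rabs_def2 in Hr; lra.
Qed.

Lemma Rbar_cv_const A : Rbar_cv (fun _ => Finite A) (Finite A).
Proof.
  intros eps He. exists 0%nat. intros p _. exists A.
  split; auto. rewrite Rminus_diag, Rabs_R0; lra.
Qed.

Lemma Rbar_cv_const_unique A s : Rbar_cv (fun _ => Finite A) s -> s = Finite A.
Proof.
  destruct s as [r| |]; simpl; intros Hs.
  - f_equal. apply cond_eq. intros eps He.
    destruct (Hs eps He) as [P HP]. destruct (HP P (le_n P)) as [r' [[= <-] Hr]].
    rewrite Rabs_minus_sym; exact Hr.
  - destruct (Hs (A + 1)) as [P HP]. specialize (HP P (le_n P)); simpl in HP; lra.
  - destruct (Hs (A - 1)) as [P HP]. specialize (HP P (le_n P)); simpl in HP; lra.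
Qed.

Lemma Rbar_limsup_ge_lim (v w : nat -> R) l : Un_cv v l -> (forall n, v n <= w n) ->
  Rbar_le (Finite l) (Rbar_limsup (fun n => Finite (w n))).
Proof.
  intros Hv Hvw. apply (proj2 (Rbar_glb_spec _)). intros z [N ->].
  apply Rbar_ge_eps. intros eps He.
  destruct (Hv eps He) as [P HP].
  specialize (HP (max N P) ltac:(lia)). unfold R_dist in HP. apply Rabs_def2 in HP.
  eapply Rbar_le_trans; [|apply (tail_lub_ge _ N (max N P)); lia].
  simpl. specialize (Hvw (max N P)). lra.
Qed.

(** * Rounding to nearest *)

Lemma powerRZ2_pos z : 0 < powerRZ 2 z.
Proof. apply powerRZ_lt; lra. Qed.

Lemma powerRZ2_add z1 z2 : powerRZ 2 (z1 + z2) = powerRZ 2 z1 * powerRZ 2 z2.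
Proof. apply powerRZ_add; lra. Qed.

Lemma is_fp_powerRZ2 m z : (1 <= m)%nat -> is_fp m (powerRZ 2 z).
Proof.
  intros Hm. exists 1%Z, (z + Z.of_nat m)%Z. split.
  - assert (2 ^ 1 <= 2 ^ Z.of_nat m)%Z by (apply Z.pow_le_mono_r; lia). simpl in *; lia.
  - replace (z + Z.of_nat m - Z.of_nat m)%Z with z by lia. simpl; lra.
Qed.

Lemma is_fp_opp m y : is_fp m y -> is_fp m (- y).
Proof.
  intros [s [e [H1 H2]]]. exists (- s)%Z, e. split.
  - rewrite Z.abs_opp; auto.
  - rewrite H2, opp_IZR. ring.
Qed.

Lemma binary_exponent_ex t : 0 < t -> exists k, powerRZ 2 (k - 1) <= t < powerRZ 2 k.
Proof.
  intros Ht. set (r := ln t / ln 2). set (k := up r). exists k.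
  destruct (archimed r) as [H1 H2]. fold k in H1, H2.
  assert (Hl : 0 < ln 2) by (pose proof ln_lt_2; lra).
  assert (Hr : ln t = r * ln 2) by (unfold r; field; lra).
  assert (Hk1 : (IZR k - 1) * ln 2 <= ln t) by (rewrite Hr; apply Rmult_le_compat_r; lra).
  assert (Hk2 : ln t < IZR k * ln 2) by (rewrite Hr; apply Rmult_lt_compat_r; lra).
  rewrite !powerRZ_Rpower, minus_IZR by lra. unfold Rpower.
  rewrite <- (exp_ln t) by exact Ht. split.
  - destruct Hk1 as [Hk1|Hk1]; [left; apply exp_increasing; lra|rewrite Hk1; lra].
  - apply exp_increasing; lra.
Qed.

(* The grid of precision-[m] numbers of binary exponent [k] has spacing [2^(k-m)]. *)
Lemma is_fp_near m t : (1 <= m)%nat -> 0 < t -> exists k z,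
  powerRZ 2 (k - 1) <= t /\ is_fp m z /\ Rabs (t - z) <= powerRZ 2 (k - 1) * / 2 ^ m.
Proof.
  intros Hm Ht. destruct (binary_exponent_ex t Ht) as [k [Hk1 Hk2]]. exists k.
  set (ulp := powerRZ 2 (k - Z.of_nat m)).
  set (u := t / ulp).
  assert (Hulp : 0 < ulp) by apply powerRZ2_pos.
  assert (Htu : t = u * ulp) by (unfold u; field; lra).
  assert (Hpk : powerRZ 2 k = 2 ^ m * ulp).
  { unfold ulp. rewrite pow_powerRZ, <- powerRZ2_add. f_equal; lia. }
  assert (Hhalf : ulp * / 2 = powerRZ 2 (k - 1) * / 2 ^ m).
  { assert (powerRZ 2 k = powerRZ 2 (k - 1) * 2) by
      (replace k with (k - 1 + 1)%Z at 1 by lia; rewrite powerRZ2_add; simpl; ring).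
    assert (0 < 2 ^ m) by (apply pow_lt; lra).
    apply (Rmult_eq_reg_r (2 * 2 ^ m)); [|lra].
    replace (ulp * / 2 * (2 * 2 ^ m)) with (2 ^ m * ulp) by (field; lra).
    rewrite <- Hpk. field_simplify; lra. }
  assert (Hu1 : u < 2 ^ m) by (apply (Rmult_lt_reg_r ulp); lra).
  assert (Hu0 : 0 <= u) by (unfold u; apply Rlt_le, Rdiv_lt_0_compat; lra).
  assert (Herr : forall z, Rabs (u - z) <= / 2 ->
    Rabs (t - z * ulp) <= powerRZ 2 (k - 1) * / 2 ^ m).
  { intros z Hz. rewrite Htu, <- Rmult_minus_distr_r, Rabs_mult, (Rabs_pos_eq ulp), <- Hhalf by lra.
    rewrite Rmult_comm. apply Rmult_le_compat_l; lra. }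
  destruct (Rlt_or_le u (2 ^ m - / 2)) as [Hu2|Hu2].
  - set (s := (up (u + / 2) - 1)%Z).
    destruct (archimed (u + / 2)) as [Ha1 Ha2].
    assert (Hs : u - / 2 < IZR s <= u + / 2) by (unfold s; rewrite minus_IZR; lra).
    exists (IZR s * ulp). split; [lra|split].
    + exists s, k. split.
      * assert (-1 < s)%Z by (apply lt_IZR; simpl; lra).
        assert (s < 2 ^ Z.of_nat m)%Z by (apply lt_IZR; rewrite <- pow_IZR; lra).
        lia.
      * reflexivity.
    + apply Herr. apply Rabs_le; lra.
  - exists (powerRZ 2 k). split; [lra|split].
    + replace k with (k + 1 - 1)%Z at 1 by lia. apply is_fp_powerRZ2; auto.
    + rewrite Hpk. apply Herr. apply Rabs_le; lra.
Qed.

Lemma nearest_rel_error_pos m t r : (1 <= m)%nat -> 0 < t ->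
  (forall z, is_fp m z -> Rabs (t - r) <= Rabs (t - z)) -> Rabs (t - r) <= / 2 ^ m * Rabs r.
Proof.
  intros Hm Ht Hnear.
  destruct (is_fp_near m t Hm Ht) as [k [z [Hk [Hz Hd]]]].
  pose proof (Hnear z Hz) as H1.
  pose proof (Hnear (powerRZ 2 (k - 1)) (is_fp_powerRZ2 m (k - 1) Hm)) as H2.
  rewrite (Rabs_pos_eq (t - powerRZ 2 (k - 1))) in H2 by lra.
  assert (Hr : powerRZ 2 (k - 1) <= r) by (pose proof (Rle_abs (t - r)); lra).
  rewrite (Rabs_pos_eq r) by (pose proof (powerRZ2_pos (k - 1)); lra).
  assert (0 < / 2 ^ m) by (apply Rinv_0_lt_compat, pow_lt; lra).
  eapply Rle_trans; [apply H1|]. eapply Rle_trans; [apply Hd|].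
  rewrite Rmult_comm. apply Rmult_le_compat_l; lra.
Qed.

Lemma round_nearest_rel_error rd m y : is_round_nearest rd -> (1 <= m)%nat ->
  Rabs (y - rd m y) <= / 2 ^ m * Rabs (rd m y).
Proof.
  intros Hrd Hm. destruct (Hrd m y) as [_ Hnear].
  destruct (Rtotal_order y 0) as [Hy|[->|Hy]].
  - replace (y - rd m y) with (- (- y - - rd m y)) by ring.
    rewrite Rabs_Ropp, <- (Rabs_Ropp (rd m y)).
    apply nearest_rel_error_pos; [auto|lra|]. intros z Hz.
    replace (- y - - rd m y) with (- (y - rd m y)) by ring.
    replace (- y - z) with (- (y - - z)) by ring.
    rewrite !Rabs_Ropp. apply Hnear, is_fp_opp, Hz.
  - assert (H0 : is_fp m 0) by (exists 0%Z, 0%Z; split; [lia|ring]).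
    pose proof (Hnear 0 H0) as H. rewrite Rminus_diag, Rabs_R0 in H.
    apply (Rle_trans _ 0 _ H), Rmult_le_pos; [|apply Rabs_pos].
    apply Rlt_le, Rinv_0_lt_compat, pow_lt; lra.
  - apply nearest_rel_error_pos; auto.
Qed.

Lemma ln_le x y : 0 < x -> x <= y -> ln x <= ln y.
Proof. intros Hx [H|H]; [left; apply ln_increasing; auto|subst; lra]. Qed.

Lemma exp_le x y : x <= y -> exp x <= exp y.
Proof. intros [H|H]; [left; apply exp_increasing; auto|subst; lra]. Qed.

Lemma ln2_pos : 0 < ln 2.
Proof. pose proof ln_lt_2; lra. Qed.

Lemma ln2_lt_1 : ln 2 < 1.
Proof.
  rewrite <- (ln_exp 1). apply ln_increasing; [lra|].
  pose proof (exp_ineq1 1 ltac:(lra)). lra.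
Qed.

Lemma ln_le_sub1 z : 0 < z -> ln z <= z - 1.
Proof. intros Hz. pose proof (exp_ineq1_le (ln z)) as H. rewrite exp_ln in H; lra. Qed.

Lemma ln_le_affine y d : 0 < y -> 0 < d -> ln y <= d * y - 1 - ln d.
Proof.
  intros Hy Hd. pose proof (ln_le_sub1 (d * y) ltac:(nra)) as H.
  rewrite ln_mult in H by auto. lra.
Qed.

Lemma pow_1plus_le_exp e n : 0 <= e -> (1 + e) ^ n <= exp (INR n * e).
Proof.
  intros He. induction n.
  - simpl. rewrite Rmult_0_l, exp_0. lra.
  - rewrite S_INR, Rmult_plus_distr_r, Rmult_1_l, exp_plus, Rmult_comm. simpl pow.
    apply Rmult_le_compat; try lra; [apply pow_le; lra|apply exp_ineq1_le].
Qed.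

Lemma Rabs_le_between x y : Rabs x <= y -> - y <= x <= y.
Proof. unfold Rabs; destruct Rcase_abs; lra. Qed.

Lemma psum_nonneg g n : (forall k, 0 <= g k) -> 0 <= psum g n.
Proof. intros H; induction n; simpl; [lra|]. specialize (H n). lra. Qed.

Lemma psum_le g h n : (forall k, g k <= h k) -> psum g n <= psum h n.
Proof. intros H; induction n; simpl; [lra|]. specialize (H n). lra. Qed.

Lemma psum_le_const g n E : (forall k, (k < n)%nat -> g k <= E) -> psum g n <= INR n * E.
Proof.
  induction n; intros Hk; [simpl; lra|]. rewrite S_INR. simpl psum.
  specialize (IHn (fun k Hk' => Hk k ltac:(lia))). specialize (Hk n ltac:(lia)). lra.
Qed.

Lemma psum_scal c g n : c * psum g n = psum (fun k => c * g k) n.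
Proof. induction n; simpl; [ring|]. rewrite <- IHn. ring. Qed.

Lemma psum_term_le g n k : (forall k, 0 <= g k) -> (k < n)%nat -> g k <= psum g n.
Proof.
  intros H; induction n; intros Hk; [lia|]. simpl.
  destruct (Nat.eq_dec k n) as [->|Hne].
  - pose proof (psum_nonneg g n H). lra.
  - specialize (IHn ltac:(lia)). specialize (H n). lra.
Qed.

(* The finitely many terms before the convergence index are absorbed into [C]. *)
Lemma Un_cv_ratio_linear_bound (g : nat -> R) l : Un_cv (fun n => g n / INR n) l ->
  forall d, 0 < d -> exists C, 0 <= C /\ forall n, Rabs (g n - INR n * l) <= d * INR n + C.
Proof.
  intros Hc d Hd. destruct (Hc d Hd) as [N1 HN1].
  set (h := fun k => Rabs (g k - INR k * l)).
  assert (Hh : forall k, 0 <= h k) by (intros; apply Rabs_pos).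
  exists (psum h (S N1)). split; [apply psum_nonneg; auto|].
  intros n. pose proof (pos_INR n). destruct (le_lt_dec n N1) as [Hn|Hn].
  - pose proof (psum_term_le h (S N1) n Hh ltac:(lia)). unfold h in *. nra.
  - specialize (HN1 n ltac:(lia)). unfold R_dist in HN1.
    assert (Hn0 : 0 < INR n) by (apply lt_0_INR; lia).
    replace (g n - INR n * l) with (INR n * (g n / INR n - l)) by (field; lra).
    rewrite Rabs_mult, Rabs_pos_eq by lra.
    pose proof (psum_nonneg h (S N1) Hh). nra.
Qed.

Lemma nat_ceil_ex y : exists m, (1 <= m)%nat /\ y <= INR m /\ INR m <= Rmax 0 y + 2.
Proof.
  destruct (archimed y) as [H1 H2]. exists (S (Z.to_nat (up y))).
  split; [lia|]. rewrite S_INR. pose proof (Rmax_l 0 y). pose proof (Rmax_r 0 y).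
  destruct (Z_le_gt_dec 0 (up y)) as [Hz|Hz].
  - rewrite INR_IZR_INZ, Z2Nat.id by lia. lra.
  - replace (Z.to_nat (up y)) with 0%nat by lia. simpl.
    assert (IZR (up y) <= -1) by (apply IZR_le; lia). lra.
Qed.

Lemma eventually_le_mult_INR C eps : 0 < eps ->
  exists P, forall N, (P <= N)%nat -> C <= eps * INR N.
Proof.
  intros He. destruct (nat_ceil_ex (C / eps)) as [P [_ [HP _]]]. exists P.
  intros N HN. apply le_INR in HN.
  replace C with (eps * (C / eps)) by (field; lra). apply Rmult_le_compat_l; lra.
Qed.

Lemma linear_dev_increment g l d C : 0 <= d ->
  (forall n, Rabs (g n - INR n * l) <= d * INR n + C) ->
  forall N j n, (j <= n)%nat -> (n <= N)%nat ->
  g n - g j <= INR N * (Rmax 0 l + 2 * d) + 2 * C.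
Proof.
  intros Hd Hg N j n Hj Hn.
  pose proof (Rabs_le_between _ _ (Hg n)). pose proof (Rabs_le_between _ _ (Hg j)).
  apply le_INR in Hj, Hn. pose proof (pos_INR j).
  pose proof (Rmax_l 0 l). pose proof (Rmax_r 0 l).
  assert ((INR n - INR j) * l <= INR N * Rmax 0 l) by nra.
  nra.
Qed.

Lemma linear_dev_step g l d C : 0 <= d ->
  (forall n, Rabs (g n - INR n * l) <= d * INR n + C) ->
  forall N n, (n < N)%nat -> - (Rabs l + d * (2 * INR N + 1) + 2 * C) <= g (S n) - g n.
Proof.
  intros Hd Hg N n Hn.
  pose proof (Rabs_le_between _ _ (Hg (S n))) as HS. pose proof (Rabs_le_between _ _ (Hg n)).
  rewrite S_INR in HS. apply lt_INR in Hn. pose proof (pos_INR n).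
  pose proof (Rabs_le_between l (Rabs l) (Rle_refl _)).
  nra.
Qed.

Lemma ld_lower_bound y c : 0 < y -> Rabs (ld y - 0) <= c -> exp (- (c * ln 2)) <= y.
Proof.
  intros Hy Hc. apply Rabs_le_between in Hc. unfold ld in Hc.
  pose proof ln2_pos. rewrite <- (exp_ln y) by exact Hy. apply exp_le.
  assert (ln y = (ln y / ln 2 - 0) * ln 2) by (field; lra). nra.
Qed.

Lemma rel_error_of_abs_error (tol mn E0 e y yh : R) : 0 < tol <= 1 ->
  e <= E0 -> E0 <= tol * mn / 4 -> mn <= Rabs y -> Rabs (y - yh) <= e ->
  e <= tol / (1 + tol) * Rabs yh.
Proof.
  intros Ht He HE Hmn Hy. pose proof (Rabs_triang_inv y yh). pose proof (Rabs_pos (y - yh)).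
  assert (Hyh : 3 * mn / 4 <= Rabs yh) by nra.
  apply Rmult_le_reg_r with (1 + tol); [lra|].
  replace (tol / (1 + tol) * Rabs yh * (1 + tol)) with (tol * Rabs yh) by (field; lra).
  nra.
Qed.

Lemma inD_between a b y z c : inD a b y -> inD a b z -> Rmin y z <= c <= Rmax y z ->
  inD a b c.
Proof.
  unfold inD; intros Hy Hz Hc. pose proof (Rmin_glb y z a). pose proof (Rmax_lub y z b).
  split; lra.
Qed.

Lemma xhat_S f Lbar rd m x n :
  xhat f Lbar rd m x (S n) = rd m (f (xhat f Lbar rd m x n)).
Proof. unfold xhat; simpl. destruct (computed f Lbar rd m x n); reflexivity. Qed.

Lemma ebar_S f Lbar rd m x n :
  ebar f Lbar rd m x (S n) =
  Lbar (xhat f Lbar rd m x n) (ebar f Lbar rd m x n) * ebar f Lbar rd m x n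
   + / 2 ^ m * Rabs (xhat f Lbar rd m x (S n)).
Proof. unfold xhat, ebar; simpl. destruct (computed f Lbar rd m x n); reflexivity. Qed.

Lemma orbit_min_abs_le f x N n : (n <= N)%nat -> orbit_min_abs f x N <= Rabs (orbit f x n).
Proof.
  induction N; intros Hn.
  - replace n with 0%nat by lia. simpl. lra.
  - simpl. destruct (Nat.eq_dec n (S N)) as [->|Hne].
    + apply Rmin_r.
    + eapply Rle_trans; [apply Rmin_l|]. apply IHN; lia.
Qed.

Lemma orbit_min_abs_pos f x N : (forall n, orbit f x n <> 0) -> 0 < orbit_min_abs f x N.
Proof.
  intros H; induction N; simpl.
  - apply Rabs_pos_lt, (H 0%nat).
  - apply Rmin_glb_lt; auto. apply Rabs_pos_lt, (H (S N)).
Qed.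

Lemma tol_bounds (p : Z) : 0 < powerRZ 10 (- p) / (1 + powerRZ 10 (- p)) <= 1.
Proof.
  pose proof (powerRZ_lt 10 (- p) ltac:(lra)).
  split; [apply Rdiv_lt_0_compat; lra|].
  apply Rmult_le_reg_r with (1 + powerRZ 10 (- p)); [lra|].
  unfold Rdiv; rewrite Rmult_assoc, Rinv_l by lra. lra.
Qed.

Lemma ex_least_nat (P : nat -> Prop) m : P m -> exists m0, P m0 /\ forall k, (k < m0)%nat -> ~ P k.
Proof.
  revert m. induction m as [m IH] using lt_wf_ind. intros Hm.
  destruct (classic (exists k, (k < m)%nat /\ P k)) as [[k [Hk HPk]]|Hn].
  - apply (IH k Hk HPk).
  - exists m. split; auto. intros k Hk HPk. apply Hn. exists k; auto.
Qed.

Lemma mmin_ratio_spec f Lbar rd x N p m : (1 <= m)%nat -> prec_ok f Lbar rd x m N p ->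
  exists mm, mmin_ratio f Lbar rd x N p = Finite (INR mm / INR N) /\
    (1 <= mm)%nat /\ prec_ok f Lbar rd x mm N p /\ (mm <= m)%nat.
Proof.
  intros Hm Hok.
  destruct (ex_least_nat (fun k => (1 <= k)%nat /\ prec_ok f Lbar rd x k N p) m (conj Hm Hok))
    as [m0 [[Hm01 Hm02] Hm03]].
  assert (Hex : exists m, is_mmin f Lbar rd x N p m).
  { exists m0. refine (conj Hm01 (conj Hm02 _)). intros k Hk Hok'.
    apply (Hm03 k); [lia|split; [lia|auto]]. }
  unfold mmin_ratio. destruct (excluded_middle_informative _) as [Hy|Hy]; [|contradiction].
  set (mm := epsilon _ _).
  assert (Hmm : is_mmin f Lbar rd x N p mm) by (apply epsilon_spec; auto).
  destruct Hmm as [Hmm1 [Hmm2 Hmm3]].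
  exists mm. split; [reflexivity|]. split; auto. split; auto.
  destruct (le_lt_dec mm m) as [Hle|Hlt]; auto.
  exfalso. apply (Hmm3 m); auto.
Qed.

(** * Error analysis of the computed sequence *)

Definition lyap_sum (f f' : R -> R) (x : R) (n : nat) : R :=
  psum (fun k => ln (Rabs (f' (orbit f x k)))) n.

Section ComputedSequence.

Variables (a b : R) (f f' f'' : R -> R) (Lbar : R -> R -> R) (M K : R)
  (rd : nat -> R -> R) (x : R).

Hypothesis Hab : a < b.
Hypothesis HfD : forall y, inD a b y -> inD a b (f y).
Hypothesis Hf' : forall y, inD a b y -> derivable_pt_lim f y (f' y).
Hypothesis Hf'' : forall y, inD a b y -> derivable_pt_lim f' y (f'' y).
Hypothesis HM : forall y, inD a b y -> Rabs (f'' y) <= M.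
Hypothesis HK : 0 <= K.
Hypothesis HLbar : forall c e l, inD a b c -> 0 <= e -> is_lub (L_set a b f' c e) l ->
  l <= Lbar c e /\ Lbar c e <= l + K * e.
Hypothesis Hrd : is_round_nearest rd.
Hypothesis Hx : inD a b x.
Hypothesis Hxh : forall m n, (1 <= m)%nat -> inD a b (xhat f Lbar rd m x n).
Hypothesis Hnz : forall n, orbit f x n <> 0.
Hypothesis Hf'nz : forall k, f' (orbit f x k) <> 0.

Local Notation xh m n := (xhat f Lbar rd m x n).
Local Notation eb m n := (ebar f Lbar rd m x n).
Local Notation Lsum := (lyap_sum f f' x).
Local Notation B := (Rmax (Rabs a) (Rabs b)).

Lemma M_nonneg : 0 <= M.
Proof.
  assert (Ha : inD a b a) by (unfold inD; lra).
  pose proof (HM a Ha). pose proof (Rabs_pos (f'' a)). lra.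
Qed.

Lemma B_pos : 0 < B.
Proof.
  pose proof (Rmax_l (Rabs a) (Rabs b)). pose proof (Rmax_r (Rabs a) (Rabs b)).
  unfold Rabs in *; repeat destruct Rcase_abs; lra.
Qed.

Lemma abs_le_B y : inD a b y -> Rabs y <= B.
Proof. intros [H1 H2]. apply RmaxAbs; auto. Qed.

Lemma orbit_inD n : inD a b (orbit f x n).
Proof. induction n; simpl; auto. Qed.

Lemma f'_lipschitz y z : inD a b y -> inD a b z -> Rabs (f' y - f' z) <= M * Rabs (y - z).
Proof.
  intros Hy Hz.
  destruct (MVT_abs f' f'' z y) as [c [Hc1 Hc2]].
  { intros c Hc. apply Hf''. apply (inD_between a b z y c); auto. }
  rewrite Hc1. apply Rmult_le_compat_r; [apply Rabs_pos|].
  apply HM, (inD_between a b z y c); auto.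
Qed.

Lemma L_set_lub_ex c e : inD a b c -> 0 <= e -> exists l, is_lub (L_set a b f' c e) l.
Proof.
  intros Hc He. destruct (completeness (L_set a b f' c e)) as [l Hl]; [| |exists l; auto].
  - exists (Rabs (f' c) + M * e). intros z [y [Hy [Hyc ->]]].
    pose proof (f'_lipschitz y c Hy Hc). pose proof (Rabs_triang_inv (f' y) (f' c)).
    pose proof M_nonneg.
    assert (M * Rabs (y - c) <= M * e) by (apply Rmult_le_compat_l; lra). lra.
  - exists (Rabs (f' c)), c. rewrite Rminus_diag, Rabs_R0. auto.
Qed.

Lemma Lbar_ge_f' c e y : inD a b c -> 0 <= e -> inD a b y -> Rabs (y - c) <= e ->
  Rabs (f' y) <= Lbar c e.
Proof.
  intros Hc He Hy Hyc. destruct (L_set_lub_ex c e Hc He) as [l Hl].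
  destruct (HLbar c e l Hc He Hl) as [H1 _].
  assert (Rabs (f' y) <= l) by (apply (proj1 Hl); exists y; auto). lra.
Qed.

Lemma Lbar_le_f' c e y0 : inD a b c -> 0 <= e -> inD a b y0 -> Rabs (y0 - c) <= e ->
  Lbar c e <= Rabs (f' y0) + (2 * M + K) * e.
Proof.
  intros Hc He Hy0 Hyc. destruct (L_set_lub_ex c e Hc He) as [l Hl].
  destruct (HLbar c e l Hc He Hl) as [_ H2].
  assert (l <= Rabs (f' y0) + 2 * M * e).
  { apply (proj2 Hl). intros z [y [Hy [Hyc' ->]]].
    pose proof (f'_lipschitz y y0 Hy Hy0). pose proof (Rabs_triang_inv (f' y) (f' y0)).
    pose proof M_nonneg.
    assert (Rabs (y - y0) <= 2 * e).
    { replace (y - y0) with ((y - c) + - (y0 - c)) by ring.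
      pose proof (Rabs_triang (y - c) (- (y0 - c))) as Ht. rewrite Rabs_Ropp in Ht. lra. }
    assert (M * Rabs (y - y0) <= M * (2 * e)) by (apply Rmult_le_compat_l; lra). lra. }
  lra.
Qed.

Lemma ebar_valid m : (1 <= m)%nat -> forall n,
  0 <= eb m n /\ Rabs (orbit f x n - xh m n) <= eb m n.
Proof.
  intros Hm. assert (Hpm : 0 < / 2 ^ m) by (apply Rinv_0_lt_compat, pow_lt; lra).
  induction n as [|n [He Hv]].
  - split; [pose proof (Rabs_pos (rd m x)); apply Rmult_le_pos; lra|].
    apply round_nearest_rel_error; auto.
  - set (c := xh m n) in *. set (e := eb m n) in *.
    assert (Hc : inD a b c) by (apply Hxh; auto).
    pose proof (orbit_inD n) as HxD.
    rewrite ebar_S, xhat_S. fold c e. split.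
    { pose proof (Rabs_pos (rd m (f c))).
      pose proof (Rle_trans _ _ _ (Rabs_pos _) (Lbar_ge_f' c e _ Hc He HxD Hv)).
      assert (0 <= Lbar c e * e) by (apply Rmult_le_pos; lra). nra. }
    simpl orbit.
    destruct (MVT_abs f f' c (orbit f x n)) as [xi [Hxi1 Hxi2]].
    { intros y Hy. apply Hf', (inD_between a b c (orbit f x n) y); auto. }
    assert (Hxic : Rabs (xi - c) <= e).
    { eapply Rle_trans; [|apply Hv]. unfold Rmin, Rmax in Hxi2.
      destruct (Rle_dec c (orbit f x n)); unfold Rabs; repeat destruct Rcase_abs; lra. }
    pose proof (Lbar_ge_f' c e xi Hc He (inD_between a b c (orbit f x n) xi Hc HxD Hxi2) Hxic).
    pose proof (round_nearest_rel_error rd m (f c) Hrd Hm).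
    replace (f (orbit f x n) - rd m (f c))
      with ((f (orbit f x n) - f c) + (f c - rd m (f c))) by ring.
    eapply Rle_trans; [apply Rabs_triang|]. apply Rplus_le_compat; [|auto].
    rewrite Hxi1.
    apply Rmult_le_compat; try apply Rabs_pos; auto.
Qed.

Lemma exp_lyap_sum_S n : exp (Lsum (S n)) = exp (Lsum n) * Rabs (f' (orbit f x n)).
Proof.
  unfold lyap_sum; simpl. rewrite exp_plus, exp_ln; auto. apply Rabs_pos_lt; auto.
Qed.

Lemma ebar_ge_growth m : (1 <= m)%nat -> forall n,
  / 2 ^ m * Rabs (rd m x) * exp (Lsum n) <= eb m n.
Proof.
  intros Hm. assert (Hpm : 0 < / 2 ^ m) by (apply Rinv_0_lt_compat, pow_lt; lra).
  induction n.
  - unfold lyap_sum; simpl. rewrite exp_0. unfold ebar; simpl. lra.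
  - rewrite exp_lyap_sum_S, ebar_S.
    destruct (ebar_valid m Hm n) as [He Hv].
    pose proof (Lbar_ge_f' _ _ _ (Hxh m n Hm) He (orbit_inD n) Hv).
    pose proof (Rabs_pos (xh m (S n))). pose proof (Rabs_pos (f' (orbit f x n))).
    assert (0 <= / 2 ^ m * Rabs (rd m x) * exp (Lsum n)).
    { pose proof (exp_pos (Lsum n)). pose proof (Rabs_pos (rd m x)).
      apply Rmult_le_pos; [apply Rmult_le_pos|]; lra. }
    assert (Rabs (f' (orbit f x n)) * (/ 2 ^ m * Rabs (rd m x) * exp (Lsum n)) <=
            Lbar (xh m n) (eb m n) * eb m n) by (apply Rmult_le_compat; auto; lra).
    nra.
Qed.

Lemma prec_ok_lower_bound m N p : (1 <= m)%nat -> prec_ok f Lbar rd x m N p ->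
  Lsum N + ln (Rabs x) - ln 2 - ln B <= INR m * ln 2.
Proof.
  intros Hm Hok.
  pose proof (Hok N (le_n N)) as HN. pose proof (tol_bounds p) as Htol.
  pose proof (abs_le_B _ (Hxh m N Hm)) as HxN. pose proof (Rabs_pos (xh m N)).
  pose proof (ebar_ge_growth m Hm N) as Hlow.
  assert (Hx0 : 0 < Rabs x) by (apply Rabs_pos_lt, (Hnz 0%nat)).
  assert (Hpm : 0 < / 2 ^ m) by (apply Rinv_0_lt_compat, pow_lt; lra).
  assert (Hrx : Rabs x / 2 <= Rabs (rd m x)).
  { pose proof (round_nearest_rel_error rd m x Hrd Hm).
    assert (/ 2 ^ m <= / 2).
    { apply Rinv_le_contravar; [lra|]. rewrite <- (pow_1 2) at 1. apply Rle_pow; [lra|exact Hm]. }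
    pose proof (Rabs_triang_inv x (rd m x)). pose proof (Rabs_pos (rd m x)). nra. }
  assert (Hchain : / 2 ^ m * (Rabs x / 2) * exp (Lsum N) <= B).
  { pose proof (exp_pos (Lsum N)).
    assert (/ 2 ^ m * (Rabs x / 2) * exp (Lsum N) <= / 2 ^ m * Rabs (rd m x) * exp (Lsum N))
      by (apply Rmult_le_compat_r; [lra|]; apply Rmult_le_compat_l; lra).
    assert (powerRZ 10 (- p) / (1 + powerRZ 10 (- p)) * Rabs (xh m N) <= Rabs (xh m N))
      by (rewrite <- (Rmult_1_l (Rabs (xh m N))) at 2; apply Rmult_le_compat_r; lra).
    lra. }
  assert (H2m : / 2 ^ m = exp (- (INR m * ln 2))).
  { rewrite exp_Ropp. f_equal. rewrite <- Rpower_pow by lra. reflexivity. }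
  rewrite H2m in Hchain. apply ln_le in Hchain.
  - assert (0 < exp (- (INR m * ln 2)) * (Rabs x / 2))
      by (pose proof (exp_pos (- (INR m * ln 2))); nra).
    rewrite !ln_mult, !ln_exp in Hchain by (try apply exp_pos; lra).
    unfold Rdiv in Hchain. rewrite ln_mult, ln_Rinv in Hchain by lra. lra.
  - pose proof (exp_pos (- (INR m * ln 2))). pose proof (exp_pos (Lsum N)).
    apply Rmult_lt_0_compat; [|lra]. apply Rmult_lt_0_compat; lra.
Qed.

(* Closed form of [G (S n) = (1 + eta) |f'(x_n)| G n + B (1 + eta) ^ (S n)], [G 0 = B]. *)
Definition err_majorant (eta : R) (n : nat) : R :=
  B * (1 + eta) ^ n * exp (Lsum n) * psum (fun j => exp (- Lsum j)) (S n).

Lemma err_majorant_nonneg eta n : 0 <= eta -> 0 <= err_majorant eta n.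
Proof.
  intros He. unfold err_majorant. pose proof B_pos. pose proof (exp_pos (Lsum n)).
  pose proof (pow_le (1 + eta) n ltac:(lra)).
  pose proof (psum_nonneg (fun j => exp (- Lsum j)) (S n) (fun j => Rlt_le _ _ (exp_pos _))).
  repeat apply Rmult_le_pos; lra.
Qed.

Lemma err_majorant_S eta n : 0 <= eta ->
  Rabs (f' (orbit f x n)) * (1 + eta) * err_majorant eta n + B <= err_majorant eta (S n).
Proof.
  intros He. unfold err_majorant.
  change (psum (fun j => exp (- Lsum j)) (S (S n)))
    with (psum (fun j => exp (- Lsum j)) (S n) + exp (- Lsum (S n))).
  assert (Hone : exp (Lsum (S n)) * exp (- Lsum (S n)) = 1)
    by (rewrite <- exp_plus, Rplus_opp_r, exp_0; auto).
  rewrite exp_lyap_sum_S in Hone |- *. simpl pow.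
  pose proof (pow_R1_Rle (1 + eta) n ltac:(lra)). pose proof B_pos.
  set (P := (1 + eta) ^ n) in *. set (Y := exp (- Lsum (S n))) in *.
  assert (1 <= (1 + eta) * P) by nra.
  replace (B * ((1 + eta) * P) * (exp (Lsum n) * Rabs (f' (orbit f x n))) *
           (psum (fun j => exp (- Lsum j)) (S n) + Y))
    with (Rabs (f' (orbit f x n)) * (1 + eta) *
            (B * P * exp (Lsum n) * psum (fun j => exp (- Lsum j)) (S n))
          + B * ((1 + eta) * P) * (exp (Lsum n) * Rabs (f' (orbit f x n)) * Y)) by ring.
  rewrite Hone. nra.
Qed.

(* While the error stays small enough, [Lbar] exceeds [|f'(x_n)|] by a factor at most [1 + eta]. *)
Lemma ebar_le_err_majorant m N eta Lf Hh : (1 <= m)%nat -> 0 < eta -> 0 < Lf ->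
  (forall n, (n < N)%nat -> Lf <= Rabs (f' (orbit f x n))) ->
  (2 * M + K + 1) * (/ 2 ^ m * Hh) <= eta * Lf ->
  (forall n, (n <= N)%nat -> err_majorant eta n <= Hh) ->
  forall n, (n <= N)%nat -> eb m n <= / 2 ^ m * err_majorant eta n.
Proof.
  intros Hm Heta HLf HLfn Hsmall HG.
  assert (Hpm : 0 < / 2 ^ m) by (apply Rinv_0_lt_compat, pow_lt; lra).
  pose proof M_nonneg. pose proof B_pos.
  induction n as [|n IHn]; intros Hn.
  - unfold err_majorant, lyap_sum, ebar; simpl. rewrite Ropp_0, exp_0.
    pose proof (abs_le_B _ (Hxh m 0 Hm)) as Hx0. unfold xhat in Hx0; simpl in Hx0. nra.
  - specialize (IHn ltac:(lia)). destruct (ebar_valid m Hm n) as [He Hv].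
    pose proof (Lbar_le_f' _ _ _ (Hxh m n Hm) He (orbit_inD n) Hv) as HL.
    pose proof (Lbar_ge_f' _ _ _ (Hxh m n Hm) He (orbit_inD n) Hv) as HLge.
    pose proof (Rabs_pos (f' (orbit f x n))).
    set (fn := Rabs (f' (orbit f x n))) in *.
    assert (HeH : eb m n <= / 2 ^ m * Hh).
    { eapply Rle_trans; [apply IHn|]. apply Rmult_le_compat_l; [lra|]. apply HG; lia. }
    assert (HLn : Lbar (xh m n) (eb m n) <= fn * (1 + eta)).
    { assert (Lf <= fn) by (apply HLfn; lia).
      assert ((2 * M + K + 1) * eb m n <= (2 * M + K + 1) * (/ 2 ^ m * Hh))
        by (apply Rmult_le_compat_l; lra).
      nra. }
    rewrite ebar_S.
    pose proof (abs_le_B _ (Hxh m (S n) Hm)).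
    pose proof (err_majorant_S eta n ltac:(lra)) as HGS. fold fn in HGS.
    pose proof (err_majorant_nonneg eta n ltac:(lra)).
    assert (Lbar (xh m n) (eb m n) * eb m n
            <= fn * (1 + eta) * (/ 2 ^ m * err_majorant eta n))
      by (apply Rmult_le_compat; lra).
    nra.
Qed.

Lemma err_majorant_le N E : 0 < E ->
  (forall j n, (j <= n)%nat -> (n <= N)%nat -> Lsum n - Lsum j <= ln E) ->
  forall n, (n <= N)%nat -> err_majorant (/ (INR N + 1)) n <= 3 * B * (INR N + 1) * E.
Proof.
  intros HE HS n Hn. pose proof B_pos.
  assert (HN1 : 0 < INR N + 1) by (pose proof (pos_INR N); lra).
  pose proof (Rinv_0_lt_compat _ HN1).
  assert (Hpow : (1 + / (INR N + 1)) ^ n <= 3).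
  { eapply Rle_trans; [apply pow_1plus_le_exp; lra|].
    eapply Rle_trans; [|apply exp_le_3]. apply exp_le.
    assert (INR n <= INR N) by (apply le_INR; auto).
    apply Rmult_le_reg_r with (INR N + 1); [lra|].
    rewrite Rmult_assoc, Rinv_l by lra. lra. }
  assert (HW : exp (Lsum n) * psum (fun j => exp (- Lsum j)) (S n) <= (INR N + 1) * E).
  { rewrite psum_scal. eapply Rle_trans; [apply psum_le_const with (E := E)|].
    - intros k Hk. rewrite <- exp_plus, <- (exp_ln E) by auto. apply exp_le.
      specialize (HS k n ltac:(lia) Hn). lra.
    - rewrite S_INR. apply Rmult_le_compat_r; [lra|]. apply Rplus_le_compat_r, le_INR; auto. }
  unfold err_majorant.
  pose proof (pow_le (1 + / (INR N + 1)) n ltac:(lra)).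
  pose proof (exp_pos (Lsum n)).
  pose proof (psum_nonneg (fun j => exp (- Lsum j)) (S n) (fun j => Rlt_le _ _ (exp_pos _))).
  assert (0 <= exp (Lsum n) * psum (fun j => exp (- Lsum j)) (S n)) by nra.
  replace (3 * B * (INR N + 1) * E) with (B * (3 * ((INR N + 1) * E))) by ring.
  rewrite !Rmult_assoc. apply Rmult_le_compat_l; [lra|].
  apply Rmult_le_compat; lra.
Qed.

Lemma prec_ok_of_small_error m N p Hh Lf mn : (1 <= m)%nat -> (0 <= p)%Z -> 0 < Lf ->
  (forall n, (n < N)%nat -> Lf <= Rabs (f' (orbit f x n))) ->
  (forall n, (n <= N)%nat -> err_majorant (/ (INR N + 1)) n <= Hh) ->
  (2 * M + K + 1) * (/ 2 ^ m * Hh) <= / (INR N + 1) * Lf ->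
  mn <= orbit_min_abs f x N ->
  / 2 ^ m * Hh <= powerRZ 10 (- p) * mn / 4 ->
  prec_ok f Lbar rd x m N p.
Proof.
  intros Hm Hp HLf HLfn HG Hcond1 Hmn Hcond2 n Hn.
  assert (Hpm : 0 < / 2 ^ m) by (apply Rinv_0_lt_compat, pow_lt; lra).
  assert (Heta : 0 < / (INR N + 1)) by (apply Rinv_0_lt_compat; pose proof (pos_INR N); lra).
  pose proof (ebar_le_err_majorant m N _ Lf Hh Hm Heta HLf HLfn Hcond1 HG n Hn) as Hinv.
  destruct (ebar_valid m Hm n) as [_ Hv].
  assert (Htol : 0 < powerRZ 10 (- p) <= 1).
  { split; [apply powerRZ_lt; lra|]. rewrite powerRZ_Rpower, <- exp_0 by lra. apply exp_le.
    assert (IZR (- p) <= 0) by (apply IZR_le; lia).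
    assert (0 < ln 10) by (rewrite <- ln_1; apply ln_increasing; lra). nra. }
  apply (rel_error_of_abs_error _ mn (/ 2 ^ m * Hh) _ (orbit f x n)); auto.
  - eapply Rle_trans; [apply Hinv|]. apply Rmult_le_compat_l; [lra|]. apply HG; auto.
  - eapply Rle_trans; [apply Hmn|]. apply orbit_min_abs_le; auto.
Qed.

Lemma f'_orbit_lower l d C : 0 <= d ->
  (forall n, Rabs (Lsum n - INR n * l) <= d * INR n + C) -> forall N n, (n < N)%nat ->
  exp (- (Rabs l + d * (2 * INR N + 1) + 2 * C)) <= Rabs (f' (orbit f x n)).
Proof.
  intros Hd HC N n Hn. rewrite <- (exp_ln (Rabs (f' (orbit f x n)))) by (apply Rabs_pos_lt; auto).
  apply exp_le. replace (ln (Rabs (f' (orbit f x n)))) with (Lsum (S n) - Lsum n)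
    by (unfold lyap_sum; simpl; ring).
  apply (linear_dev_step Lsum l d C); auto.
Qed.

Variable lam : R.
Hypothesis Hlam : Un_cv (lyap_avg f f' x) lam.
Hypothesis Hmin : Un_cv (fun N => ld (orbit_min_abs f x N) / INR N) 0.

(* The requirements on the computation at step [N] are bounded by quantities whose logarithms
   grow like [N * max(0, lam)] up to [o(N)]: the error majorant, the inverse of the smallest
   derivative, and the inverse of the smallest iterate. *)
Lemma linear_budget_suffices p d : (0 <= p)%Z -> 0 < d -> exists K0, forall N m,
  (1 <= m)%nat -> INR N * (Rmax 0 lam + 6 * d) + K0 <= INR m * ln 2 ->
  prec_ok f Lbar rd x m N p.
Proof.
  intros Hp Hd.
  destruct (Un_cv_ratio_linear_bound Lsum lam Hlam d Hd) as [C [HC0 HC]].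
  destruct (Un_cv_ratio_linear_bound _ 0 Hmin d Hd) as [C3 [HC30 HC3]].
  pose proof M_nonneg. pose proof B_pos. pose proof ln2_pos. pose proof ln2_lt_1.
  set (mu := Rmax 0 lam). pose proof (Rmax_l 0 lam). pose proof (Rmax_r 0 lam).
  set (tl := IZR (- p) * ln 10).
  (* [br1] and [br2] collect the constant terms of the two smallness conditions of
     [prec_ok_of_small_error]. *)
  set (br1 := ln (2 * M + K + 1) + ln 3 + ln B + 2 * (d - 1 - ln d) + 4 * C + Rabs lam + d).
  set (br2 := ln 4 + ln 3 + ln B + (d - 1 - ln d) + 2 * C - tl + C3 * ln 2).
  exists (Rabs br1 + Rabs br2). intros N m Hm Hbud.
  pose proof (Rle_abs br1). pose proof (Rle_abs br2). pose proof (Rabs_pos br1).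
  pose proof (Rabs_pos br2). pose proof (pos_INR N).
  assert (0 <= d * INR N) by (apply Rmult_le_pos; lra).
  assert (d * INR N * ln 2 <= d * INR N) by (rewrite <- (Rmult_1_r (d * INR N)) at 2;
    apply Rmult_le_compat_l; lra).
  set (lnN := ln (INR N + 1)).
  assert (HlnN : lnN <= d * (INR N + 1) - 1 - ln d) by (apply ln_le_affine; lra).
  set (E := exp (INR N * (mu + 2 * d) + 2 * C)).
  set (lnH := ln 3 + ln B + lnN + (INR N * (mu + 2 * d) + 2 * C)).
  set (Lf := exp (- (Rabs lam + d * (2 * INR N + 1) + 2 * C))).
  set (mn := exp (- ((d * INR N + C3) * ln 2))).
  assert (Hr : / 2 ^ m = exp (- (INR m * ln 2))).
  { rewrite exp_Ropp. f_equal. rewrite <- Rpower_pow by lra. reflexivity. }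
  assert (HHh : 3 * B * (INR N + 1) * E = exp lnH)
    by (unfold lnH, E, lnN; rewrite !exp_plus, !exp_ln by lra; ring).
  apply (prec_ok_of_small_error m N p (3 * B * (INR N + 1) * E) Lf mn); auto.
  - apply exp_pos.
  - intros n Hn. apply (f'_orbit_lower lam d C); auto; lra.
  - apply err_majorant_le; [apply exp_pos|]. intros j n Hj Hn. unfold E. rewrite ln_exp.
    apply (linear_dev_increment Lsum lam d C); auto; lra.
  - rewrite Hr, HHh. unfold Lf.
    rewrite <- (exp_ln (2 * M + K + 1)) at 1 by lra.
    rewrite <- (exp_ln (INR N + 1)) at 1 by lra.
    rewrite <- exp_Ropp, <- !exp_plus. apply exp_le. fold lnN. unfold lnH, br1 in *. lra.
  - apply ld_lower_bound; [apply orbit_min_abs_pos; auto|].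
    specialize (HC3 N). rewrite Rmult_0_r in HC3. exact HC3.
  - rewrite Hr, HHh, powerRZ_Rpower by lra. unfold Rpower, mn. fold tl.
    replace (exp tl * exp (- ((d * INR N + C3) * ln 2)) / 4)
      with (exp (tl + - ((d * INR N + C3) * ln 2) + - ln 4))
      by (rewrite !exp_plus, (exp_Ropp (ln 4)), exp_ln by lra; field).
    rewrite <- exp_plus. apply exp_le. unfold lnH, br2 in *. lra.
Qed.

Lemma prec_ok_linear_precision p d : (0 <= p)%Z -> 0 < d -> exists A, forall N,
  exists m, (1 <= m)%nat /\ prec_ok f Lbar rd x m N p /\
    INR m <= INR N * (Rmax 0 lam + 6 * d) / ln 2 + A.
Proof.
  intros Hp Hd. destruct (linear_budget_suffices p d Hp Hd) as [K0 HK0].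
  pose proof ln2_pos. pose proof (Rmax_l 0 lam).
  exists (Rabs K0 / ln 2 + 2). intros N.
  set (Y := INR N * (Rmax 0 lam + 6 * d) + Rabs K0).
  assert (HY : 0 <= Y) by (unfold Y; pose proof (pos_INR N); pose proof (Rabs_pos K0); nra).
  destruct (nat_ceil_ex (Y / ln 2)) as [m [Hm [Hm1 Hm2]]].
  exists m. split; [auto|split].
  - apply HK0; auto. pose proof (Rle_abs K0).
    apply Rmult_le_compat_r with (r := ln 2) in Hm1; [|lra].
    unfold Rdiv in Hm1. rewrite Rmult_assoc, Rinv_l in Hm1 by lra. unfold Y in Hm1. lra.
  - rewrite Rmax_right in Hm2
      by (unfold Rdiv; apply Rmult_le_pos; [lra|apply Rlt_le, Rinv_0_lt_compat; lra]).
    unfold Y in Hm2. unfold Rdiv in *. lra.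
Qed.

Lemma prec_ok_ratio_lower p eps : 0 < eps -> exists P, forall N m, (P <= N)%nat ->
  (1 <= m)%nat -> prec_ok f Lbar rd x m N p -> / ln 2 * Rmax 0 lam - eps < INR m / INR N.
Proof.
  intros He. pose proof ln2_pos.
  assert (Hel : 0 < eps * ln 2) by nra.
  destruct (Hlam (eps * ln 2 / 2) ltac:(lra)) as [N1 HN1].
  set (Cx := ln (Rabs x) - ln 2 - ln B).
  destruct (eventually_le_mult_INR (Rabs Cx) (eps * ln 2 / 4) ltac:(lra)) as [P HP].
  exists (max 1 (max N1 P)). intros N m HN Hm Hok.
  assert (HN0 : 0 < INR N) by (apply lt_0_INR; lia).
  assert (Hm0 : 0 < INR m) by (apply lt_0_INR; lia).
  assert (Hq : 0 < INR m / INR N) by (apply Rdiv_lt_0_compat; lra).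
  destruct (Rle_lt_dec lam 0) as [Hl|Hl].
  { rewrite Rmax_left by lra. lra. }
  rewrite Rmax_right by lra.
  pose proof (prec_ok_lower_bound m N p Hm Hok) as Hlow.
  specialize (HN1 N ltac:(lia)). specialize (HP N ltac:(lia)).
  unfold R_dist, lyap_avg in HN1. fold (Lsum N) in HN1. apply Rabs_def2 in HN1.
  pose proof (Rle_abs (- Cx)) as HCx. rewrite Rabs_Ropp in HCx.
  assert (HS : Lsum N = Lsum N / INR N * INR N) by (field; lra).
  assert (0 < (Lsum N / INR N - (lam - eps * ln 2 / 2)) * INR N)
    by (apply Rmult_lt_0_compat; lra).
  assert (0 < eps * ln 2 * INR N) by (apply Rmult_lt_0_compat; lra).
  assert (Hlm : (lam - eps * ln 2) * INR N < INR m * ln 2) by (unfold Cx in *; lra).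
  apply (Rmult_lt_reg_r (INR N * ln 2)); [nra|].
  replace (INR m / INR N * (INR N * ln 2)) with (INR m * ln 2) by (field; lra).
  replace ((/ ln 2 * lam - eps) * (INR N * ln 2)) with ((lam - eps * ln 2) * INR N)
    by (field; lra).
  exact Hlm.
Qed.

Lemma prec_ok_ratio_upper p eps : (0 <= p)%Z -> 0 < eps -> exists P, forall N, (P <= N)%nat ->
  exists m, (1 <= m)%nat /\ prec_ok f Lbar rd x m N p /\
    INR m / INR N < / ln 2 * Rmax 0 lam + eps.
Proof.
  intros Hp He. pose proof ln2_pos.
  destruct (prec_ok_linear_precision p (eps * ln 2 / 12) Hp ltac:(nra)) as [A HA].
  destruct (eventually_le_mult_INR (Rabs A) (eps / 4) ltac:(lra)) as [P HP].
  exists (max 1 P). intros N HN. destruct (HA N) as [m [Hm [Hok Hmb]]].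
  exists m. split; [auto|split; [auto|]].
  assert (HN0 : 0 < INR N) by (apply lt_0_INR; lia).
  specialize (HP N ltac:(lia)). pose proof (Rle_abs A).
  apply (Rmult_lt_reg_r (INR N)); [lra|].
  replace (INR m / INR N * INR N) with (INR m) by (field; lra).
  replace (INR N * (Rmax 0 lam + 6 * (eps * ln 2 / 12)) / ln 2)
    with (INR N * (/ ln 2 * Rmax 0 lam) + INR N * (eps / 2)) in Hmb by (field; lra).
  assert (0 < eps * INR N) by (apply Rmult_lt_0_compat; lra).
  lra.
Qed.

Lemma mmin_ratio_cv p : (0 <= p)%Z ->
  Rbar_cv (fun N => mmin_ratio f Lbar rd x N p) (Finite (/ ln 2 * Rmax 0 lam)).
Proof.
  intros Hp eps He.
  destruct (prec_ok_ratio_lower p eps He) as [P1 HP1].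
  destruct (prec_ok_ratio_upper p eps Hp He) as [P2 HP2].
  exists (max 1 (max P1 P2)). intros N HN.
  destruct (HP2 N ltac:(lia)) as [m [Hm [Hok Hup]]].
  destruct (mmin_ratio_spec f Lbar rd x N p m Hm Hok) as [mm [Heq [Hmm1 [Hmm2 Hmm3]]]].
  exists (INR mm / INR N). split; [exact Heq|].
  pose proof (HP1 N mm ltac:(lia) Hmm1 Hmm2).
  assert (INR mm / INR N <= INR m / INR N).
  { apply Rmult_le_compat_r; [apply Rlt_le, Rinv_0_lt_compat, lt_0_INR; lia|].
    apply le_INR; auto. }
  apply Rabs_def1; lra.
Qed.

End ComputedSequence.

Lemma lyap_le_lyap_bar f f' x lam lambar : (forall k, f' (orbit f x k) <> 0) ->
  Un_cv (lyap_avg f f' x) lam -> Rbar_lim_0plus (lyap_bar_alpha f f' x) lambar ->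
  lam <= lambar.
Proof.
  intros Hnz Hlam Hbar. apply Rnot_lt_le. intros Hlt.
  destruct (Hbar ((lam - lambar) / 2) ltac:(lra)) as [del [Hdel Hd]].
  destruct (Hd (del / 2) ltac:(lra)) as [r [Hr1 Hr2]].
  assert (Hge : Rbar_le (Finite lam) (lyap_bar_alpha f f' x (del / 2))).
  { apply (Rbar_limsup_ge_lim (lyap_avg f f' x)); auto. intros n.
    unfold lyap_avg, Rdiv. apply Rmult_le_compat_r.
    - destruct n; [simpl; rewrite Rinv_0; lra|].
      left; apply Rinv_0_lt_compat, lt_0_INR; lia.
    - apply psum_le. intros k. unfold eta. destruct (Rle_dec _ _); [apply Rle_refl|].
      left; apply ln_increasing; [apply Rabs_pos_lt; auto|lra]. }
  rewrite Hr1 in Hge. simpl in Hge. apply Rabs_def2 in Hr2. lra.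
Qed.

Theorem mainTheorem11
  (a b : R) (f f' f'' : R -> R) (Lbar : R -> R -> R) (Lmax K : R)
  (rd : nat -> R -> R) (q : Q) (lam lambar : R) :
  a < b ->
  (forall y, inD a b y -> inD a b (f y)) ->
  (forall y, inD a b y -> derivable_pt_lim f y (f' y)) ->
  (forall y, inD a b y -> derivable_pt_lim f' y (f'' y)) ->
  (forall y, inD a b y -> continuity_pt f'' y) ->
  (exists M, forall y, inD a b y -> Rabs (f'' y) <= M) ->
  0 <= Lmax -> 0 <= K ->
  (forall c e l, inD a b c -> 0 <= e -> is_lub (L_set a b f' c e) l ->
     l <= Lbar c e /\ Lbar c e <= Rmin Lmax (l + K * e)) ->
  is_round_nearest rd ->
  inD a b (Q2R q) ->
  (forall m n, (1 <= m)%nat -> inD a b (xhat f Lbar rd m (Q2R q) n)) ->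
  (forall n, orbit f (Q2R q) n <> 0) ->
  Un_cv (fun N => ld (orbit_min_abs f (Q2R q) N) / INR N) 0 ->
  (forall k, f' (orbit f (Q2R q) k) <> 0) ->
  Un_cv (lyap_avg f f' (Q2R q)) lam ->
  Rbar_lim_0plus (lyap_bar_alpha f f' (Q2R q)) lambar ->
  let sig := fun p : nat => sigma_rate f Lbar rd (Q2R q) (Z.of_nat p) in
  Rbar_le (Finite (/ ln 2 * Rmax 0 lam)) (Rbar_liminf sig) /\
  Rbar_le (Rbar_liminf sig) (Rbar_limsup sig) /\
  Rbar_le (Rbar_limsup sig) (Finite (/ ln 2 * Rmax 0 lambar)) /\
  (forall s, Rbar_cv sig s ->
     Rbar_le (Finite (/ ln 2 * Rmax 0 lam)) s /\
     Rbar_le s (Finite (/ ln 2 * Rmax 0 lambar))) /\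
  (lambar = lam -> Rbar_cv sig (Finite (/ ln 2 * Rmax 0 lam))).
Proof.
  intros Hab HfD Hf' Hf'' _ [M HM] _ HK HLbar Hrd Hx Hxh Hnz Hmin Hf'nz Hlam Hbar sig.
  set (A := / ln 2 * Rmax 0 lam).
  assert (Hsig : sig = fun _ => Finite A).
  { apply functional_extensionality. intros p. apply Rbar_limsup_cv.
    apply (mmin_ratio_cv a b f f' f'' Lbar M K rd (Q2R q)); auto; [|lia].
    intros c e l Hc He Hl. destruct (HLbar c e l Hc He Hl) as [H1 H2].
    split; [exact H1|]. eapply Rle_trans; [apply H2|apply Rmin_r]. }
  assert (HAB : A <= / ln 2 * Rmax 0 lambar).
  { pose proof (lyap_le_lyap_bar _ _ _ _ _ Hf'nz Hlam Hbar).
    apply Rmult_le_compat_l; [left; apply Rinv_0_lt_compat, ln2_pos|].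
    apply Rmax_lub; [apply Rmax_l|]. eapply Rle_trans; [eassumption|apply Rmax_r]. }
  rewrite Hsig, (Rbar_liminf_cv _ A), (Rbar_limsup_cv _ A) by apply Rbar_cv_const.
  simpl. split; [lra|]. split; [lra|]. split; [lra|]. split.
  - intros s Hs. rewrite (Rbar_cv_const_unique A s Hs). simpl; lra.
  - intros _. apply Rbar_cv_const.
Qed.
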